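(* Let $X$ be a finite set of clocks and $P$ a finite set of parameters, and let $Z$ be a parametric zone over $(X,P)$, written as a finite conjunction of constraints $Z=\bigwedge_i \phi_i$. Then: (1) The upper temporal bound of $Z$ satisfies $$\bigcup_{\psi\in U_{Temp}(Z)} UB(Z,\psi) \;=\; \Big\{\, v+\delta_{sup} \;\Big|\; v\in Z,\ \delta_{sup}=\sup\{\delta\in\mathbb{R}_{\ge 0}\mid v+\delta\in Z\}\in\mathbb{R}_{\ge 0}\,\Big\}.$$ (2) The lower temporal bound of $Z$ satisfies $$\bigcup_{\psi\in L_{Temp}(Z)} LB(Z,\psi) \;=\; \Big\{\, v-\delta_{sup} \;\Big|\; v\in Z,\ \delta_{sup}=\sup\{\delta\in\mathbb{R}_{\ge 0}\mid v-\delta\in Z\}\in\mathbb{R}_{\ge 0}\,\Big\}.$$ (In particular, the supremum is required to be finite; if $Z$ has no upper temporal constraint, both sides of (1) are empty.)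
   Context: A valuation is a pair $v=(v_X,v_P)$ with $v_X:X\to\mathbb{R}_{\ge0}$ and $v_P:P\to\mathbb{Q}_{\ge0}$. A linear term over $P$ is an expression $k_0+\sum_j k_j p_j$ with $k_j\in\mathbb{Q}$, $p_j\in P$; $v(plt)$ denotes its value under $v_P$. A parametric zone is a finite conjunction of constraints of the forms $x\sim plt$, $x-y\sim plt$, or $plt'\sim plt$, with $x,y\in X$, $plt,plt'$ linear terms over $P$ and ${\sim}\in\{<,\le,=,\ge,>\}$; it is identified with the set of valuations satisfying it. For $\delta\ge 0$, $v+\delta$ (resp. $v-\delta$) is the valuation that adds (resp. subtracts) $\delta$ to every clock value and leaves parameters unchanged; $v-\delta\in Z$ requires in particular all clock values to be nonnegative. Upper temporal constraints of $Z$, denoted $U_{Temp}(Z)$, are its conjuncts $x\sim plt$ with ${\sim}\in\{<,\le,=\}$; lower temporal constraints $L_{Temp}(Z)$ are its conjuncts $x\sim plt$ with ${\sim}\in\{>,\ge,=\}$, together with the implicit constraints $x\ge 0$ for every $x\in X$. All other conjuncts (of the form $x-y\sim plt$ or $plt'\sim plt$) are called diagonal constraints. The upper temporal closure $\overline{Z}^{U}$ of $Z$ is obtained by keeping diagonal constraints unchanged, making every upper temporal constraint non-strict ($<$ becomes $\le$) and every lower temporal constraint strict ($\ge$ becomes $>$, including the implicit $x\ge0$ which becomes $x>0$). The lower temporal closure $\overline{Z}^{L}$ is defined symmetrically: lower temporal constraints made non-strict, upper temporal constraints made strict, diagonal constraints unchanged. For an upper temporal constraint $\psi=(x\sim plt)$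 of $Z$, the temporal upper bound $UB(Z,\psi)$ is the zone obtained by replacing $x\le plt$ by $x=plt$ in $Z$ if $\psi$ is non-strict, or in $\overline{Z}^{U}$ if $\psi$ is strict. For a lower temporal constraint $\psi=(x\sim plt)$, the temporal lower bound $LB(Z,\psi)$ is obtained by replacing $x\ge plt$ by $x=plt$ in $Z$ if $\psi$ is non-strict, or in $\overline{Z}^{L}$ if $\psi$ is strict. *)

From Stdlib Require Import Reals QArith Qreals List.
Set Implicit Arguments.
Open Scope R_scope.

Inductive cmp := CLt | CLe | CEq | CGe | CGt.

Definition sem_cmp (k : cmp) (a b : R) : Prop :=
  match k with
  | CLt => a < b | CLe => a <= b | CEq => a = b | CGe => a >= b | CGt => a > b
  end.

Record lterm (P : Type) := LTerm { lt_const : Q ; lt_coeffs : list (Q * P) }.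

Record valuation (X P : Type) := Val { vX : X -> R ; vP : P -> Q }.

Definition valid_val (X P : Type) (v : valuation X P) : Prop :=
  (forall x, 0 <= vX v x) /\ (forall p, (0 <= vP v p)%Q).

Definition eval_lt (X P : Type) (v : valuation X P) (t : lterm P) : R :=
  Q2R (lt_const t + fold_right (fun kp acc => (fst kp * vP v (snd kp) + acc)%Q)
                                0%Q (lt_coeffs t))%Q.

Inductive constr (X P : Type) :=
| CClock : X -> cmp -> lterm P -> constr X P
| CDiag  : X -> X -> cmp -> lterm P -> constr X P
| CParam : lterm P -> cmp -> lterm P -> constr X P.
Arguments CClock {X P}.
Arguments CDiag {X P}.
Arguments CParam {X P}.

Definition zone (X P : Type) := list (constr X P).

Definition sat_constr (X P : Type) (c : constr X P) (v : valuation X P) : Prop :=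
  match c with
  | CClock x k t => sem_cmp k (vX v x) (eval_lt v t)
  | CDiag x y k t => sem_cmp k (vX v x - vX v y) (eval_lt v t)
  | CParam t' k t => sem_cmp k (eval_lt v t') (eval_lt v t)
  end.

(** Membership of a valuation in a zone (valuations are nonnegative, which
    also encodes the implicit constraints x >= 0). *)
Definition in_zone (X P : Type) (Z : zone X P) (v : valuation X P) : Prop :=
  valid_val v /\ forall j c, nth_error Z j = Some c -> sat_constr c v.

(** Time shifts v + d (use d < 0 for v - |d|); parameters unchanged. *)
Definition shift (X P : Type) (v : valuation X P) (d : R) : valuation X P :=
  Val (fun x => vX v x + d) (vP v).

Definition is_upper_cmp (k : cmp) : Prop := k = CLt \/ k = CLe \/ k = CEq.
Definition is_lower_cmp (k : cmp) : Prop := k = CGt \/ k = CGe \/ k = CEq.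
Definition is_strict (k : cmp) : bool :=
  match k with CLt | CGt => true | _ => false end.

(** An equality x = plt is both an upper (x <= plt)
    and a lower (x >= plt) temporal constraint; each half is transformed. *)
Definition sat_closU (X P : Type) (c : constr X P) (v : valuation X P) : Prop :=
  match c with
  | CClock x k t =>
      match k with
      | CLt | CLe => vX v x <= eval_lt v t
      | CGt | CGe => vX v x > eval_lt v t
      | CEq => vX v x <= eval_lt v t /\ vX v x > eval_lt v t
      end
  | _ => sat_constr c v
  end.

Definition sat_closL (X P : Type) (c : constr X P) (v : valuation X P) : Prop :=
  match c with
  | CClock x k t =>
      match k with
      | CLt | CLe => vX v x < eval_lt v t
      | CGt | CGe => vX v x >= eval_lt v t
      | CEq => vX v x >= eval_lt v t /\ vX v x < eval_lt v t
      end
  | _ => sat_constr c v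
  end.

(** The closures as sets (implicit x >= 0 becomes x > 0 in the upper closure
    and stays x >= 0 in the lower closure). *)
Definition in_closU (X P : Type) (Z : zone X P) (v : valuation X P) : Prop :=
  (forall x, 0 < vX v x) /\ (forall p, (0 <= vP v p)%Q) /\
  (forall j c, nth_error Z j = Some c -> sat_closU c v).

Definition in_closL (X P : Type) (Z : zone X P) (v : valuation X P) : Prop :=
  valid_val v /\ (forall j c, nth_error Z j = Some c -> sat_closL c v).

Definition in_UTemp (X P : Type) (Z : zone X P) (i : nat) : Prop :=
  exists x k t, nth_error Z i = Some (CClock x k t) /\ is_upper_cmp k.

(** UB(Z, psi) for psi the i-th conjunct: in Z (if psi non-strict) or in the
    upper closure (if psi strict), the conjunct x <= plt (obtained from psi)
    is replaced by x = plt; all other conjuncts are kept. *)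
Definition UB (X P : Type) (Z : zone X P) (i : nat) (v : valuation X P) : Prop :=
  exists x k t, nth_error Z i = Some (CClock x k t) /\
    vX v x = eval_lt v t /\
    if is_strict k then
      (forall y, 0 < vX v y) /\ (forall p, (0 <= vP v p)%Q) /\
      (forall j c, j <> i -> nth_error Z j = Some c -> sat_closU c v)
    else
      valid_val v /\
      (forall j c, j <> i -> nth_error Z j = Some c -> sat_constr c v).

(** L_Temp(Z): explicit lower conjuncts (by index) and implicit x >= 0. *)
Inductive lpsi (X : Type) := LExpl : nat -> lpsi X | LImpl : X -> lpsi X.
Arguments LExpl {X}.
Arguments LImpl {X}.

Definition in_LTemp (X P : Type) (Z : zone X P) (psi : lpsi X) : Prop :=
  match psi with
  | LExpl i => exists x k t, nth_error Z i = Some (CClock x k t) /\ is_lower_cmp k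
  | LImpl _ => True
  end.

Definition LB (X P : Type) (Z : zone X P) (psi : lpsi X) (v : valuation X P) : Prop :=
  match psi with
  | LExpl i =>
      exists x k t, nth_error Z i = Some (CClock x k t) /\
        vX v x = eval_lt v t /\
        if is_strict k then
          valid_val v /\
          (forall j c, j <> i -> nth_error Z j = Some c -> sat_closL c v)
        else
          valid_val v /\
          (forall j c, j <> i -> nth_error Z j = Some c -> sat_constr c v)
  | LImpl x =>
      (* implicit x >= 0 is non-strict: replaced by x = 0 in Z *)
      in_zone Z v /\ vX v x = 0
  end.

Definition UB_union (X P : Type) (Z : zone X P) (w : valuation X P) : Prop :=
  exists i, in_UTemp Z i /\ UB Z i w.

Definition LB_union (X P : Type) (Z : zone X P) (w : valuation X P) : Prop :=
  exists psi, in_LTemp Z psi /\ LB Z psi w.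

(** Along the ray d |-> v + d a zone is an interval of delays, since every
    constraint is either invariant under delay (diagonal and parameter
    constraints) or a half-line in d.  Hence the supremum D of the admissible
    delays is attained exactly when v + D lies in Z and some non-strict upper
    constraint is tight there (otherwise every constraint leaves room for a
    further small delay, using finiteness of the clocks and of the zone); it is
    not attained exactly when v + D lies in the upper closure of Z with a strict
    upper constraint tight.  These are the two shapes of the sets UB(Z, psi).
    The lower bounds are symmetric, the implicit constraints x >= 0 playing the
    role of non-strict lower constraints. *)

From Stdlib Require Import Reals QArith List Lra Classical FunctionalExtensionality.
Open Scope R_scope.

Definition near_right0 (Q : R -> Prop) : Prop :=
  exists e, 0 < e /\ forall d, 0 < d <= e -> Q d.

Lemma near_right0_always {Q : R -> Prop} :
  (forall d, 0 < d -> Q d) -> near_right0 Q.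
Proof. intros H; exists 1; split; [lra|]; intros d Hd; apply H; lra. Qed.

Lemma near_right0_lt {a b} : a < b -> near_right0 (fun d => a + d < b).
Proof. intros H; exists ((b - a) / 2); split; [lra|]; intros d Hd; lra. Qed.

Lemma near_right0_impl {Q Q' : R -> Prop} :
  near_right0 Q -> (forall d, 0 < d -> Q d -> Q' d) -> near_right0 Q'.
Proof.
  intros [e [He HQ]] H; exists e; split; [exact He|].
  intros d Hd; apply H; [lra|apply HQ; exact Hd].
Qed.

Lemma near_right0_and {Q Q' : R -> Prop} :
  near_right0 Q -> near_right0 Q' -> near_right0 (fun d => Q d /\ Q' d).
Proof.
  intros [e [He HQ]] [e' [He' HQ']]; exists (Rmin e e'); split.
  - apply Rmin_glb_lt; assumption.
  - intros d Hd; pose proof (Rmin_l e e'); pose proof (Rmin_r e e').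
    split; [apply HQ|apply HQ']; lra.
Qed.

Lemma near_right0_forall_In {A : Type} (l : list A) {Q : A -> R -> Prop} :
  (forall a, In a l -> near_right0 (Q a)) ->
  near_right0 (fun d => forall a, In a l -> Q a d).
Proof.
  induction l as [|a l IH]; intros H.
  - apply near_right0_always; intros d _ b [].
  - apply (near_right0_impl (near_right0_and (H a (or_introl eq_refl))
                               (IH (fun b Hb => H b (or_intror Hb))))).
    intros d _ [Ha Hl] b [<-|Hb]; auto.
Qed.

Lemma near_right0_forall_finite {A : Type} {Q : A -> R -> Prop} :
  (exists l : list A, forall a, In a l) ->
  (forall a, near_right0 (Q a)) -> near_right0 (fun d => forall a, Q a d).
Proof.
  intros [l Hl] H.
  apply (near_right0_impl (near_right0_forall_In l (fun a _ => H a))).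
  intros d _ Hd a; apply Hd, Hl.
Qed.

Lemma near_right0_forall_nth {A : Type} (l : list A) (Q : nat -> A -> R -> Prop) :
  (forall j a, nth_error l j = Some a -> near_right0 (Q j a)) ->
  near_right0 (fun d => forall j a, nth_error l j = Some a -> Q j a d).
Proof.
  revert Q; induction l as [|a l IH]; intros Q H.
  - apply near_right0_always; intros d _ [|j] b Hj; discriminate.
  - apply (near_right0_impl (near_right0_and (H 0%nat a eq_refl)
                               (IH (fun j => Q (S j)) (fun j => H (S j))))).
    intros d _ [Ha Hl] [|j] b Hj; simpl in Hj.
    + injection Hj as <-; exact Ha.
    + exact (Hl j b Hj).
Qed.

Lemma add_le_of_forall_lt y T D :
  0 < D -> (forall d, 0 <= d < D -> y + d <= T) -> y + D <= T.
Proof.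
  intros HD H; apply Rnot_lt_le; intros Hc.
  pose proof (H 0 ltac:(lra)); pose proof (H ((T - y + D) / 2) ltac:(lra)); lra.
Qed.

Lemma is_lub_of_interval {S : R -> Prop} {m} :
  S 0 -> (forall d, 0 <= d < m -> S d) -> (forall d, S d -> d <= m) -> is_lub S m.
Proof.
  intros S0 Hin Hub; split; [exact Hub|].
  intros b Hb; pose proof (Hb 0 S0); apply Rnot_lt_le; intros Hbm.
  assert (Hmid : (b + m) / 2 <= b) by (apply Hb, Hin; lra); lra.
Qed.

Lemma is_lub_convex_interval {S : R -> Prop} {D} :
  (forall a b d, S a -> S b -> a <= d <= b -> S d) -> S 0 -> is_lub S D ->
  forall d, 0 <= d < D -> S d.
Proof.
  intros Hconv S0 [Hub Hleast] d Hd.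
  destruct (classic (exists e, S e /\ d < e)) as [[e [He Hde]]|Hno].
  - apply (Hconv 0 e); auto; lra.
  - assert (D <= d); [|lra].
    apply Hleast; intros e He; apply Rnot_lt_le; intros Hde; apply Hno; eauto.
Qed.

Lemma is_lub_no_room_above {S : R -> Prop} {D} :
  is_lub S D -> ~ near_right0 (fun d => S (D + d)).
Proof.
  intros [Hub _] [e [He HS]]; pose proof (Hub _ (HS e ltac:(lra))); lra.
Qed.

Section Zone.

Set Implicit Arguments.
Unset Strict Implicit.

Context {X P : Type}.
Variable Z : zone X P.

Lemma shift_add (v : valuation X P) a b : shift (shift v a) b = shift v (a + b).
Proof. unfold shift; simpl; f_equal; apply functional_extensionality; intros; ring. Qed.

Lemma shift_0 (v : valuation X P) : shift v 0 = v.
Proof.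
  destruct v as [f g]; unfold shift; simpl; f_equal.
  apply functional_extensionality; intros; ring.
Qed.

Lemma eval_lt_shift (v : valuation X P) d t : eval_lt (shift v d) t = eval_lt v t.
Proof. reflexivity. Qed.

Ltac simpl_sat :=
  cbn [sat_constr sat_closU sat_closL sem_cmp] in *;
  rewrite ?eval_lt_shift in *; cbn [vX vP shift] in *.

Definition delays_up (v : valuation X P) (d : R) : Prop :=
  0 <= d /\ in_zone Z (shift v d).

Definition delays_down (v : valuation X P) (d : R) : Prop :=
  0 <= d /\ in_zone Z (shift v (- d)).

Definition upper_tight (w : valuation X P) : Prop :=
  exists i x k t, nth_error Z i = Some (CClock x k t) /\
    (k = CLe \/ k = CEq) /\ vX w x = eval_lt w t.

Definition upper_tight_strict (w : valuation X P) : Prop :=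
  exists i x t, nth_error Z i = Some (CClock x CLt t) /\ vX w x = eval_lt w t.

Definition lower_tight (w : valuation X P) : Prop :=
  (exists x, vX w x = 0) \/
  exists i x k t, nth_error Z i = Some (CClock x k t) /\
    (k = CGe \/ k = CEq) /\ vX w x = eval_lt w t.

Definition lower_tight_strict (w : valuation X P) : Prop :=
  exists i x t, nth_error Z i = Some (CClock x CGt t) /\ vX w x = eval_lt w t.

Lemma in_zone_convex v a b d :
  in_zone Z (shift v a) -> in_zone Z (shift v b) -> a <= d <= b ->
  in_zone Z (shift v d).
Proof.
  intros [[Ha Hp] Hsa] [[Hb _] Hsb] Hd; split; [split|].
  - intros x; specialize (Ha x); specialize (Hb x); simpl_sat; lra.
  - exact Hp.
  - intros j c Hj; specialize (Hsa j c Hj); specialize (Hsb j c Hj).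
    destruct c as [x k t|x y k t|t' k t]; destruct k; simpl_sat; lra.
Qed.

Lemma delays_up_convex v a b d :
  delays_up v a -> delays_up v b -> a <= d <= b -> delays_up v d.
Proof.
  intros [Ha Hza] [_ Hzb] Hd; split; [lra|exact (in_zone_convex Hza Hzb Hd)].
Qed.

Lemma delays_down_convex v a b d :
  delays_down v a -> delays_down v b -> a <= d <= b -> delays_down v d.
Proof.
  intros [Ha Hza] [_ Hzb] Hd; split; [lra|].
  apply (in_zone_convex Hzb Hza); lra.
Qed.

Lemma in_zone_of_others (w : valuation X P) i c :
  nth_error Z i = Some c -> sat_constr c w -> valid_val w ->
  (forall j c', j <> i -> nth_error Z j = Some c' -> sat_constr c' w) ->
  in_zone Z w.
Proof.
  intros Hi Hc Hv Hothers; split; [exact Hv|]; intros j c' Hj.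
  destruct (Nat.eq_dec j i) as [ -> | Hne]; [congruence|eauto].
Qed.

Lemma in_closU_of_others (w : valuation X P) i c :
  nth_error Z i = Some c -> sat_closU c w ->
  (forall x, 0 < vX w x) -> (forall p, (0 <= vP w p)%Q) ->
  (forall j c', j <> i -> nth_error Z j = Some c' -> sat_closU c' w) ->
  in_closU Z w.
Proof.
  intros Hi Hc Hx Hp Hothers; split; [exact Hx|split; [exact Hp|]]; intros j c' Hj.
  destruct (Nat.eq_dec j i) as [ -> | Hne]; [congruence|eauto].
Qed.

Lemma in_closL_of_others (w : valuation X P) i c :
  nth_error Z i = Some c -> sat_closL c w -> valid_val w ->
  (forall j c', j <> i -> nth_error Z j = Some c' -> sat_closL c' w) ->
  in_closL Z w.
Proof.
  intros Hi Hc Hv Hothers; split; [exact Hv|]; intros j c' Hj.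
  destruct (Nat.eq_dec j i) as [ -> | Hne]; [congruence|eauto].
Qed.

Lemma UB_union_iff w :
  UB_union Z w <->
  (in_zone Z w /\ upper_tight w) \/ (in_closU Z w /\ upper_tight_strict w).
Proof.
  split.
  - intros [i [[x0 [k0 [t0 [Hi0 Hk0]]]] [x [k [t [Hi [Heq Hrest]]]]]]].
    rewrite Hi0 in Hi; injection Hi as -> -> ->.
    destruct Hk0 as [ -> | [ -> | -> ]]; simpl in Hrest.
    + destruct Hrest as [Hx [Hp Hothers]]; right; split.
      * apply (in_closU_of_others Hi0); auto; simpl_sat; lra.
      * exists i, x, t; auto.
    + destruct Hrest as [Hv Hothers]; left; split.
      * apply (in_zone_of_others Hi0); auto; simpl_sat; lra.
      * exists i, x, CLe, t; auto.
    + destruct Hrest as [Hv Hothers]; left; split.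
      * apply (in_zone_of_others Hi0); auto.
      * exists i, x, CEq, t; auto.
  - intros [[[Hv Hsat] [i [x [k [t [Hi [Hk Heq]]]]]]] |
            [[Hx [Hp Hcl]] [i [x [t [Hi Heq]]]]]].
    + exists i; split.
      * exists x, k, t; split; [exact Hi|unfold is_upper_cmp; tauto].
      * exists x, k, t; split; [exact Hi|split; [exact Heq|]].
        destruct Hk as [ -> | -> ]; simpl; split; eauto.
    + exists i; split.
      * exists x, CLt, t; split; [exact Hi|unfold is_upper_cmp; tauto].
      * exists x, CLt, t; simpl; eauto 10.
Qed.

Lemma LB_union_iff w :
  LB_union Z w <->
  (in_zone Z w /\ lower_tight w) \/ (in_closL Z w /\ lower_tight_strict w).
Proof.
  split.
  - intros [[i|x] [HL HLB]].
    + destruct HL as [x0 [k0 [t0 [Hi0 Hk0]]]].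
      destruct HLB as [x [k [t [Hi [Heq Hrest]]]]].
      rewrite Hi0 in Hi; injection Hi as -> -> ->.
      destruct Hk0 as [ -> | [ -> | -> ]]; simpl in Hrest; destruct Hrest as [Hv Hothers].
      * right; split.
        -- apply (in_closL_of_others Hi0); auto; simpl_sat; lra.
        -- exists i, x, t; auto.
      * left; split.
        -- apply (in_zone_of_others Hi0); auto; simpl_sat; lra.
        -- right; exists i, x, CGe, t; auto.
      * left; split.
        -- apply (in_zone_of_others Hi0); auto.
        -- right; exists i, x, CEq, t; auto.
    + destruct HLB as [Hz Hx]; left; split; [exact Hz|left; exists x; exact Hx].
  - intros [[Hz [[x Hx] | [i [x [k [t [Hi [Hk Heq]]]]]]]] |
            [[Hv Hcl] [i [x [t [Hi Heq]]]]]].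
    + exists (LImpl x); split; [exact I|split; assumption].
    + destruct Hz as [Hv Hsat]; exists (LExpl i); split.
      * exists x, k, t; split; [exact Hi|unfold is_lower_cmp; tauto].
      * exists x, k, t; split; [exact Hi|split; [exact Heq|]].
        destruct Hk as [ -> | -> ]; simpl; split; eauto.
    + exists (LExpl i); split.
      * exists x, CGt, t; split; [exact Hi|unfold is_lower_cmp; tauto].
      * exists x, CGt, t; simpl; eauto 10.
Qed.

Lemma upper_tight_delay_le w e :
  upper_tight w -> in_zone Z (shift w e) -> e <= 0.
Proof.
  intros [i [x [k [t [Hi [Hk Heq]]]]]] [_ Hsat]; specialize (Hsat i _ Hi).
  destruct Hk as [ -> | -> ]; simpl_sat; lra.
Qed.

Lemma upper_tight_strict_delay_lt w e :
  upper_tight_strict w -> in_zone Z (shift w e) -> e < 0.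
Proof.
  intros [i [x [t [Hi Heq]]]] [_ Hsat]; specialize (Hsat i _ Hi); simpl_sat; lra.
Qed.

Lemma lower_tight_delay_ge w e :
  lower_tight w -> in_zone Z (shift w e) -> 0 <= e.
Proof.
  intros [[x Hx] | [i [x [k [t [Hi [Hk Heq]]]]]]] [[Hpos _] Hsat].
  - specialize (Hpos x); simpl_sat; lra.
  - specialize (Hsat i _ Hi); destruct Hk as [ -> | -> ]; simpl_sat; lra.
Qed.

Lemma lower_tight_strict_delay_gt w e :
  lower_tight_strict w -> in_zone Z (shift w e) -> 0 < e.
Proof.
  intros [i [x [t [Hi Heq]]]] [_ Hsat]; specialize (Hsat i _ Hi); simpl_sat; lra.
Qed.

Lemma sat_constr_near_above (c : constr X P) w :
  sat_constr c w ->
  (forall x k t, c = CClock x k t -> k = CLe \/ k = CEq -> vX w x <> eval_lt w t) ->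
  near_right0 (fun d => sat_constr c (shift w d)).
Proof.
  intros Hc Hloose; destruct c as [x k t|x y k t|t' k t].
  - assert (Hne : k = CLe \/ k = CEq -> vX w x <> eval_lt w t) by eauto.
    destruct k; simpl_sat;
      try (apply near_right0_always; intros d Hd; simpl_sat; lra).
    + apply (near_right0_impl (near_right0_lt Hc)); intros d _ Hd; simpl_sat; lra.
    + assert (Hlt : vX w x < eval_lt w t) by (pose proof (Hne (or_introl eq_refl)); lra).
      apply (near_right0_impl (near_right0_lt Hlt)); intros d _ Hd; simpl_sat; lra.
    + destruct (Hne (or_intror eq_refl) Hc).
  - apply near_right0_always; intros d _; destruct k; simpl_sat; lra.
  - apply near_right0_always; intros d _; destruct k; simpl_sat; lra.
Qed.

Lemma sat_constr_near_below (c : constr X P) w :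
  sat_constr c w ->
  (forall x k t, c = CClock x k t -> k = CGe \/ k = CEq -> vX w x <> eval_lt w t) ->
  near_right0 (fun d => sat_constr c (shift w (- d))).
Proof.
  intros Hc Hloose; destruct c as [x k t|x y k t|t' k t].
  - assert (Hne : k = CGe \/ k = CEq -> vX w x <> eval_lt w t) by eauto.
    destruct k; simpl_sat;
      try (apply near_right0_always; intros d Hd; simpl_sat; lra).
    + destruct (Hne (or_intror eq_refl) Hc).
    + assert (Hlt : eval_lt w t < vX w x) by (pose proof (Hne (or_introl eq_refl)); lra).
      apply (near_right0_impl (near_right0_lt Hlt)); intros d _ Hd; simpl_sat; lra.
    + apply (near_right0_impl (near_right0_lt Hc)); intros d _ Hd; simpl_sat; lra.
  - apply near_right0_always; intros d _; destruct k; simpl_sat; lra.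
  - apply near_right0_always; intros d _; destruct k; simpl_sat; lra.
Qed.

Lemma sat_closU_near_below (c : constr X P) w :
  sat_closU c w -> near_right0 (fun d => sat_constr c (shift w (- d))).
Proof.
  intros Hc; destruct c as [x k t|x y k t|t' k t].
  - destruct k; simpl_sat;
      try (apply near_right0_always; intros d Hd; simpl_sat; lra);
      apply (near_right0_impl (near_right0_lt Hc)); intros d _ Hd; simpl_sat; lra.
  - apply near_right0_always; intros d _; destruct k; simpl_sat; lra.
  - apply near_right0_always; intros d _; destruct k; simpl_sat; lra.
Qed.

Lemma sat_closL_near_above (c : constr X P) w :
  sat_closL c w -> near_right0 (fun d => sat_constr c (shift w d)).
Proof.
  intros Hc; destruct c as [x k t|x y k t|t' k t].
  - destruct k; simpl_sat;
      try (apply near_right0_always; intros d Hd; simpl_sat; lra);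
      apply (near_right0_impl (near_right0_lt Hc)); intros d _ Hd; simpl_sat; lra.
  - apply near_right0_always; intros d _; destruct k; simpl_sat; lra.
  - apply near_right0_always; intros d _; destruct k; simpl_sat; lra.
Qed.

Lemma sat_closU_of_below (c : constr X P) v D :
  0 < D -> (forall d, 0 <= d < D -> sat_constr c (shift v d)) ->
  sat_closU c (shift v D).
Proof.
  intros HD Hc; pose proof (Hc 0 ltac:(lra)); pose proof (Hc (D / 2) ltac:(lra)).
  destruct c as [x k t|x y k t|t' k t]; destruct k; simpl_sat; try lra;
    apply add_le_of_forall_lt; auto; intros d Hd; specialize (Hc d Hd); simpl_sat; lra.
Qed.

Lemma sat_closL_of_below (c : constr X P) v D :
  0 < D -> (forall d, 0 <= d < D -> sat_constr c (shift v (- d))) ->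
  sat_closL c (shift v (- D)).
Proof.
  intros HD Hc; pose proof (Hc 0 ltac:(lra)); pose proof (Hc (D / 2) ltac:(lra)).
  destruct c as [x k t|x y k t|t' k t]; destruct k; simpl_sat; try lra;
    enough (eval_lt v t + D <= vX v x) by lra;
    apply add_le_of_forall_lt; auto; intros d Hd; specialize (Hc d Hd); simpl_sat; lra.
Qed.

Lemma sat_closU_not_sat (c : constr X P) w :
  sat_closU c w -> ~ sat_constr c w ->
  exists x t, c = CClock x CLt t /\ vX w x = eval_lt w t.
Proof.
  intros Hcl Hs; destruct c as [x k t|x y k t|t' k t]; try contradiction.
  destruct k; simpl_sat; try lra; exists x, t; split; [reflexivity|lra].
Qed.

Lemma sat_closL_not_sat (c : constr X P) w :
  sat_closL c w -> ~ sat_constr c w ->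
  exists x t, c = CClock x CGt t /\ vX w x = eval_lt w t.
Proof.
  intros Hcl Hs; destruct c as [x k t|x y k t|t' k t]; try contradiction.
  destruct k; simpl_sat; try lra; exists x, t; split; [reflexivity|lra].
Qed.

Lemma in_zone_near_above w :
  in_zone Z w -> ~ upper_tight w -> near_right0 (fun d => in_zone Z (shift w d)).
Proof.
  intros [[Hx Hp] Hsat] Hnt.
  assert (Hnear : near_right0 (fun d => forall j c, nth_error Z j = Some c ->
                                         sat_constr c (shift w d))).
  { apply near_right0_forall_nth; intros j c Hj.
    apply (sat_constr_near_above (Hsat j c Hj)); intros x k t -> Hk Heq.
    apply Hnt; exists j, x, k, t; auto. }
  apply (near_right0_impl Hnear); intros d Hd Hs; split; [split|]; auto.
  intros x; specialize (Hx x); simpl_sat; lra.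
Qed.

Lemma in_zone_near_below (HX : exists lX : list X, forall x, In x lX) w :
  in_zone Z w -> ~ lower_tight w -> near_right0 (fun d => in_zone Z (shift w (- d))).
Proof.
  intros [[Hx Hp] Hsat] Hnt.
  assert (Hclocks : near_right0 (fun d => forall x, 0 <= vX (shift w (- d)) x)).
  { apply near_right0_forall_finite; [exact HX|]; intros x.
    assert (Hpos : 0 + 0 < vX w x).
    { destruct (Req_dec (vX w x) 0) as [E|E]; [destruct Hnt; left; eauto|].
      specialize (Hx x); lra. }
    apply (near_right0_impl (near_right0_lt Hpos)); intros d _ Hd; simpl_sat; lra. }
  assert (Hnear : near_right0 (fun d => forall j c, nth_error Z j = Some c ->
                                         sat_constr c (shift w (- d)))).
  { apply near_right0_forall_nth; intros j c Hj.
    apply (sat_constr_near_below (Hsat j c Hj)); intros x k t -> Hk Heq.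
    apply Hnt; right; exists j, x, k, t; auto. }
  apply (near_right0_impl (near_right0_and Hclocks Hnear)).
  intros d _ [Hc Hs]; split; [split|]; auto.
Qed.

Lemma in_closU_near_below (HX : exists lX : list X, forall x, In x lX) w :
  in_closU Z w -> near_right0 (fun d => in_zone Z (shift w (- d))).
Proof.
  intros [Hx [Hp Hcl]].
  assert (Hclocks : near_right0 (fun d => forall x, 0 <= vX (shift w (- d)) x)).
  { apply near_right0_forall_finite; [exact HX|]; intros x.
    assert (Hpos : 0 + 0 < vX w x) by (specialize (Hx x); lra).
    apply (near_right0_impl (near_right0_lt Hpos)); intros d _ Hd; simpl_sat; lra. }
  assert (Hnear : near_right0 (fun d => forall j c, nth_error Z j = Some c ->
                                         sat_constr c (shift w (- d))))
    by (apply near_right0_forall_nth; intros j c Hj; exact (sat_closU_near_below (Hcl j c Hj))).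
  apply (near_right0_impl (near_right0_and Hclocks Hnear)).
  intros d _ [Hc Hs]; split; [split|]; auto.
Qed.

Lemma in_closL_near_above w :
  in_closL Z w -> near_right0 (fun d => in_zone Z (shift w d)).
Proof.
  intros [[Hx Hp] Hcl].
  assert (Hnear : near_right0 (fun d => forall j c, nth_error Z j = Some c ->
                                         sat_constr c (shift w d)))
    by (apply near_right0_forall_nth; intros j c Hj; exact (sat_closL_near_above (Hcl j c Hj))).
  apply (near_right0_impl Hnear); intros d Hd Hs; split; [split|]; auto.
  intros x; specialize (Hx x); simpl_sat; lra.
Qed.

Lemma in_closU_of_below v D :
  0 < D -> (forall d, 0 <= d < D -> in_zone Z (shift v d)) -> in_closU Z (shift v D).
Proof.
  intros HD Hbelow; destruct (Hbelow 0 ltac:(lra)) as [[Hx Hp] _].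
  split; [|split].
  - intros x; specialize (Hx x); simpl_sat; lra.
  - exact Hp.
  - intros j c Hj; apply sat_closU_of_below; [exact HD|].
    intros d Hd; exact (proj2 (Hbelow d Hd) j c Hj).
Qed.

Lemma in_closL_of_below v D :
  0 < D -> (forall d, 0 <= d < D -> in_zone Z (shift v (- d))) ->
  in_closL Z (shift v (- D)).
Proof.
  intros HD Hbelow; destruct (Hbelow 0 ltac:(lra)) as [[_ Hp] _].
  split; [split|].
  - intros x; enough (0 + D <= vX v x) by (simpl_sat; lra).
    apply add_le_of_forall_lt; [exact HD|]; intros d Hd.
    destruct (Hbelow d Hd) as [[Hx _] _]; specialize (Hx x); simpl_sat; lra.
  - exact Hp.
  - intros j c Hj; apply sat_closL_of_below; [exact HD|].
    intros d Hd; exact (proj2 (Hbelow d Hd) j c Hj).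
Qed.

Lemma in_closU_not_in_zone w :
  in_closU Z w -> ~ in_zone Z w -> upper_tight_strict w.
Proof.
  intros [Hx [Hp Hcl]] Hout; apply NNPP; intros Hnt; apply Hout.
  split; [split; [intros x; apply Rlt_le, Hx|exact Hp]|].
  intros j c Hj; apply NNPP; intros Hs.
  destruct (sat_closU_not_sat (Hcl j c Hj) Hs) as [x [t [-> Heq]]].
  apply Hnt; exists j, x, t; auto.
Qed.

Lemma in_closL_not_in_zone w :
  in_closL Z w -> ~ in_zone Z w -> lower_tight_strict w.
Proof.
  intros [Hv Hcl] Hout; apply NNPP; intros Hnt; apply Hout.
  split; [exact Hv|]; intros j c Hj; apply NNPP; intros Hs.
  destruct (sat_closL_not_sat (Hcl j c Hj) Hs) as [x [t [-> Heq]]].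
  apply Hnt; exists j, x, t; auto.
Qed.

Lemma UB_union_of_is_lub (HX : exists lX : list X, forall x, In x lX) v D :
  in_zone Z v -> is_lub (delays_up v) D -> UB_union Z (shift v D).
Proof.
  intros Hv Hlub.
  assert (S0 : delays_up v 0) by (split; [lra|rewrite shift_0; exact Hv]).
  assert (Hbelow := is_lub_convex_interval (delays_up_convex (v := v)) S0 Hlub).
  apply UB_union_iff.
  destruct (classic (in_zone Z (shift v D))) as [Hin|Hout].
  - destruct (classic (upper_tight (shift v D))) as [Ht|Hnt]; [left; auto|].
    exfalso; apply (is_lub_no_room_above Hlub).
    apply (near_right0_impl (in_zone_near_above Hin Hnt)); intros d Hd Hz.
    pose proof (proj1 Hlub 0 S0); rewrite shift_add in Hz; split; [lra|exact Hz].
  - assert (HD : 0 < D).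
    { pose proof (proj1 Hlub 0 S0); destruct (Req_dec D 0) as [ -> | ]; [|lra].
      rewrite shift_0 in Hout; contradiction. }
    assert (Hcl := in_closU_of_below HD (fun d Hd => proj2 (Hbelow d Hd))).
    right; split; [exact Hcl|exact (in_closU_not_in_zone Hcl Hout)].
Qed.

Lemma LB_union_of_is_lub (HX : exists lX : list X, forall x, In x lX) v D :
  in_zone Z v -> is_lub (delays_down v) D -> LB_union Z (shift v (- D)).
Proof.
  intros Hv Hlub.
  assert (S0 : delays_down v 0) by (split; [lra|rewrite Ropp_0, shift_0; exact Hv]).
  assert (Hbelow := is_lub_convex_interval (delays_down_convex (v := v)) S0 Hlub).
  apply LB_union_iff.
  destruct (classic (in_zone Z (shift v (- D)))) as [Hin|Hout].
  - destruct (classic (lower_tight (shift v (- D)))) as [Ht|Hnt]; [left; auto|].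
    exfalso; apply (is_lub_no_room_above Hlub).
    apply (near_right0_impl (in_zone_near_below HX Hin Hnt)); intros d Hd Hz.
    pose proof (proj1 Hlub 0 S0); rewrite shift_add in Hz.
    replace (- D + - d) with (- (D + d)) in Hz by ring; split; [lra|exact Hz].
  - assert (HD : 0 < D).
    { pose proof (proj1 Hlub 0 S0); destruct (Req_dec D 0) as [ -> | ]; [|lra].
      rewrite Ropp_0, shift_0 in Hout; contradiction. }
    assert (Hcl := in_closL_of_below HD (fun d Hd => proj2 (Hbelow d Hd))).
    right; split; [exact Hcl|exact (in_closL_not_in_zone Hcl Hout)].
Qed.

(** If the bound is not attained, the witness is w - m for an m small enough
    that w - m lies in Z; its admissible delays are then exactly [0, m). *)
Lemma is_lub_of_UB_union (HX : exists lX : list X, forall x, In x lX) w :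
  UB_union Z w ->
  exists v D, in_zone Z v /\ is_lub (delays_up v) D /\ w = shift v D.
Proof.
  intros HUB; apply UB_union_iff in HUB.
  destruct HUB as [[Hz Ht] | [Hcl Hst]].
  - exists w, 0; split; [exact Hz|split; [|now rewrite shift_0]].
    apply is_lub_of_interval.
    + split; [lra|rewrite shift_0; exact Hz].
    + intros d Hd; lra.
    + intros d [_ Hzd]; exact (upper_tight_delay_le Ht Hzd).
  - destruct (in_closU_near_below HX Hcl) as [m [Hm Hnear]].
    exists (shift w (- m)), m; split; [apply Hnear; lra|split].
    + apply is_lub_of_interval.
      * split; [lra|rewrite shift_add, Rplus_0_r; apply Hnear; lra].
      * intros d Hd; split; [lra|rewrite shift_add].
        replace (- m + d) with (- (m - d)) by ring; apply Hnear; lra.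
      * intros d [_ Hzd]; rewrite shift_add in Hzd.
        pose proof (upper_tight_strict_delay_lt Hst Hzd); lra.
    + rewrite shift_add, Rplus_opp_l, shift_0; reflexivity.
Qed.

Lemma is_lub_of_LB_union w :
  LB_union Z w ->
  exists v D, in_zone Z v /\ is_lub (delays_down v) D /\ w = shift v (- D).
Proof.
  intros HLB; apply LB_union_iff in HLB.
  destruct HLB as [[Hz Ht] | [Hcl Hst]].
  - exists w, 0; split; [exact Hz|split; [|now rewrite Ropp_0, shift_0]].
    apply is_lub_of_interval.
    + split; [lra|rewrite Ropp_0, shift_0; exact Hz].
    + intros d Hd; lra.
    + intros d [_ Hzd]; pose proof (lower_tight_delay_ge Ht Hzd); lra.
  - destruct (in_closL_near_above Hcl) as [m [Hm Hnear]].
    exists (shift w m), m; split; [apply Hnear; lra|split].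
    + apply is_lub_of_interval.
      * split; [lra|rewrite shift_add, Ropp_0, Rplus_0_r; apply Hnear; lra].
      * intros d Hd; split; [lra|rewrite shift_add; apply Hnear; lra].
      * intros d [_ Hzd]; rewrite shift_add in Hzd.
        pose proof (lower_tight_strict_delay_gt Hst Hzd); lra.
    + rewrite shift_add, Rplus_opp_r, shift_0; reflexivity.
Qed.

End Zone.

Theorem theorem2 (X P : Type)
  (HX : exists lX : list X, forall x, In x lX)
  (HP : exists lP : list P, forall p, In p lP)
  (Z : zone X P) :
  (forall w : valuation X P,
     UB_union Z w <->
     exists (v : valuation X P) (dsup : R),
       in_zone Z v /\
       is_lub (fun d => 0 <= d /\ in_zone Z (shift v d)) dsup /\
       w = shift v dsup)
  /\
  (forall w : valuation X P,
     LB_union Z w <->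
     exists (v : valuation X P) (dsup : R),
       in_zone Z v /\
       is_lub (fun d => 0 <= d /\ in_zone Z (shift v (- d))) dsup /\
       w = shift v (- dsup)).
Proof.
  split; intros w; split.
  - apply (is_lub_of_UB_union HX).
  - intros [v [D [Hv [Hlub ->]]]]; exact (UB_union_of_is_lub HX Hv Hlub).
  - apply is_lub_of_LB_union.
  - intros [v [D [Hv [Hlub ->]]]]; exact (LB_union_of_is_lub HX Hv Hlub).
Qed.
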